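(* Suppose system $(\Sigma)$ has stochastic relative degree $r$ at $\bar x$ and that the row vectors $\frac{\partial h}{\partial x}(\bar x),\frac{\partial \mathcal S_{f,l}h}{\partial x}(\bar x),\dots,\frac{\partial \mathcal S^{r-1}_{f,l}h}{\partial x}(\bar x)$ are linearly independent. Set $\phi_i(x)=\mathcal S^{i-1}_{f,l}h(x)$ for $i=1,\dots,r$. If $r<n$, there exist smooth real-valued functions $\phi_{r+1},\dots,\phi_n$ such that the Jacobian of $\Phi(x)=[\phi_1(x),\dots,\phi_n(x)]^\top$ is invertible at $\bar x$, so that $\Phi$ is a coordinate transformation on a neighbourhood of $\bar x$. In the coordinates $z_t=\Phi(x_t)$ system $(\Sigma)$ reads $$\dot z_i=z_{i+1}\ (i=1,\dots,r-1),\quad \dot z_r=c(\xi_t,z_t)+b(\xi_t,z_t)u+a(z_t)u^2,$$ $$\dot z_j=p_j(\xi_t,z_t)+q_j(\xi_t,z_t)u+s_j(z_t)u^2\ (j=r+1,\dots,n),\quad y_t=z_1,$$ where $c(\xi,z)=\mathcal S^r_{f,l}h(\xi,\Phi^{-1}(z))$, $b(\xi,z)=\mathcal A_{l,m,g}\mathcal S^{r-1}_{f,l}h(\xi,\Phi^{-1}(z))$, $a(z)=\frac12H_{m,m}\mathcal S^{r-1}_{f,l}h(\Phi^{-1}(z))$, $p_j(\xi,z)=\mathcal S_{f,l}\phi_j(\xi,\Phi^{-1}(z))$, $q_j(\xi,z)=\mathcal A_{l,m,g}\phi_j(\xi,\Phi^{-1}(z))$, $s_j(z)=\frac12H_{m,m}\phi_j(\Phi^{-1}(z))$;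 in particular $c,b,p_j,q_j$ are affine in $\xi$.
   Context: System $(\Sigma)$: $dx_t=(f(x_t)+g(x_t)u)dt+(l(x_t)+m(x_t)u)d\mathcal W_t$, $y_t=h(x_t)$, Itô sense, $x_t\in\mathbb R^n$, $u,y_t\in\mathbb R$, all maps smooth, $\mathcal W_t$ scalar standard Brownian motion, unique solutions; equivalently $\dot x_t=f+gu+(l+mu)\xi_t$ with $\xi_t=\dot{\mathcal W}_t$ generalised white noise; derivatives computed by Itô's formula. Notation: $L_fh=\frac{\partial h}{\partial x}f$; $H_{f,g}h=g^\top\frac{\partial^2h}{\partial x^2}f$; $\mathcal S_{f,l}h(\xi,x)=L_fh(x)+L_lh(x)\xi+\frac12H_{l,l}h(x)$ (defined for any smooth $h$), iterates $\mathcal S^k_{f,l}h=\mathcal S_{f,l}\mathcal S^{k-1}_{f,l}h$ defined when $\mathcal S^{k-1}_{f,l}h$ does not depend on $\xi$, $\mathcal S^0_{f,l}h=h$; $\mathcal A_{l,m,g}h(\xi,x)=L_gh(x)+L_mh(x)\xi+H_{l,m}h(x)$. Stochastic relative degree $r$ at $\bar x$: (ND) $L_l\mathcal S^k_{f,l}h=0$ and $L_m\mathcal S^k_{f,l}h=0$ near $\bar x$ for $k\in\{0,\dots,r-2\}$; (CD) $L_g\mathcal S^k_{f,l}h+H_{l,m}\mathcal S^k_{f,l}h=0$, $L_m\mathcal S^k_{f,l}h=0$, $H_{m,m}\mathcal S^k_{f,l}h=0$ near $\bar x$ for $k\in\{0,\dots,r-2\}$; (RD) at $\bar x$, $L_g\mathcal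 S^{r-1}_{f,l}h+H_{l,m}\mathcal S^{r-1}_{f,l}h\ne0$ or $L_m\mathcal S^{r-1}_{f,l}h\ne0$ or $H_{m,m}\mathcal S^{r-1}_{f,l}h\ne0$. *)

From HB Require Import structures.
From mathcomp Require Import all_boot all_order all_algebra.
From mathcomp Require Import all_classical all_reals all_analysis.
Set Implicit Arguments. Unset Strict Implicit. Unset Printing Implicit Defensive.
Import Order.TTheory GRing.Theory Num.Theory.
Import numFieldNormedType.Exports.
Local Open Scope ring_scope.

Section StochDefs.
Variables (R : realType) (n : nat).
Local Notation V := 'rV[R]_n.

Fixpoint Ck (k : nat) (h : V -> R) : Prop :=
  match k with
  | 0 => continuous h
  | k'.+1 => (forall x, differentiable h x) /\
             (forall v : V, Ck k' (fun x => derive h x v))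
  end.
Definition smooth (h : V -> R) : Prop := forall k, Ck k h.
Definition smooth_vf (F : V -> V) : Prop :=
  forall i : 'I_n, smooth (fun x => F x ord0 i).

Definition Lie (F : V -> V) (h : V -> R) (x : V) : R := derive h x (F x).
Definition Hess (F G : V -> V) (h : V -> R) (x : V) : R :=
  derive (fun y => derive h y (F x)) x (G x).

Definition grad (h : V -> R) (x : V) : 'rV[R]_n :=
  \row_j derive h x (delta_mx 0 j).

Definition S (f l : V -> V) (h : V -> R) (xi : R) (x : V) : R :=
  Lie f h x + Lie l h x * xi + 2^-1 * Hess l l h x.
(* the xi-free part of S_{f,l} h; used to form the iterates S^k_{f,l} h,
   which are only defined when the previous iterate does not depend on xi *)
Definition Sdrift (f l : V -> V) (h : V -> R) : V -> R :=
  fun x => Lie f h x + 2^-1 * Hess l l h x.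
Definition Siter (f l : V -> V) (k : nat) (h : V -> R) : V -> R :=
  iter k (Sdrift f l) h.
Definition A (l m g : V -> V) (h : V -> R) (xi : R) (x : V) : R :=
  Lie g h x + Lie m h x * xi + Hess l m h x.

(* time derivative of h(x_t) along (Sigma) with input value u and noise value
   xi, computed by Ito's formula:
   d h(x) = [L_{f+gu} h + 1/2 H_{l+mu,l+mu} h] dt + L_{l+mu} h dW *)
Definition itoD (f g l m : V -> V) (h : V -> R) (u xi : R) (x : V) : R :=
  let F := fun y => f y + u *: g y in
  let G := fun y => l y + u *: m y in
  Lie F h x + Lie G h x * xi + 2^-1 * Hess G G h x.

Definition stoch_rel_deg (f g l m : V -> V) (h : V -> R) (r : nat) (xbar : V)
  : Prop :=
  (0 < r)%N /\
  (forall k : nat, (k.+2 <= r)%N ->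
     \forall x \near xbar,
       Lie l (Siter f l k h) x = 0 /\ Lie m (Siter f l k h) x = 0) /\
  (forall k : nat, (k.+2 <= r)%N ->
     \forall x \near xbar,
       Lie g (Siter f l k h) x + Hess l m (Siter f l k h) x = 0 /\
       Lie m (Siter f l k h) x = 0 /\
       Hess m m (Siter f l k h) x = 0) /\
  (Lie g (Siter f l r.-1 h) xbar + Hess l m (Siter f l r.-1 h) xbar != 0 \/
   Lie m (Siter f l r.-1 h) xbar != 0 \/
   Hess m m (Siter f l r.-1 h) xbar != 0).

End StochDefs.

From HB Require Import structures.
From mathcomp Require Import all_boot all_order all_algebra.
From mathcomp Require Import all_classical all_reals all_analysis.
From mathcomp Require Import ring lra.
Import Order.TTheory GRing.Theory Num.Theory.
Import numFieldNormedType.Exports.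
Local Open Scope ring_scope.

(* Their gradients at
   xbar are independent, so completing them by the linear forms given by the
   rows of a complement of their row space yields an invertible Jacobian.
   By Ito's formula the drift of phi(x_t) under input u is the generator of
   the diffusion with drift f + u g and noise l + u m applied to phi; linearity
   of L and bilinearity and symmetry (Schwarz) of H turn it into
   S phi + (A phi) u + 1/2 (H_{m,m} phi) u^2.  Conditions (ND) and (CD) kill the
   noise and input terms of the first r - 1 iterates, which gives the chain of
   integrators z_i' = z_{i+1}. *)

Lemma row_free_complmx_unit (F : fieldType) (r n : nat)
    (M : 'M[F]_(r, n)) (N : 'M[F]_n) :
  row_free M ->
  (forall (i : 'I_n) (ltir : (i < r)%N), row i N = row (Ordinal ltir) M) ->
  (forall i : 'I_n, (r <= i)%N -> row i N = row i (M^C)%MS) ->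
  N \in unitmx.
Proof.
move=> freeM NM NC; rewrite -row_full_unit -sub1mx.
have := addsmx_compl_full M; rewrite -sub1mx => /submx_trans; apply.
rewrite addsmx_sub; apply/andP; split; apply/row_subP => i.
  have ltin : (i < n)%N.
    by apply: leq_trans (ltn_ord i) _; rewrite -(eqP freeM) rank_leq_col.
  have -> : row i M = row (Ordinal ltin) N.
    by rewrite (NM (Ordinal ltin) (ltn_ord i)); congr row; apply: val_inj.
  exact: row_sub.
have [ltir | leri] := ltnP i r; last by rewrite -NC // row_sub.
(* [M^C] is [copid_mx (\rank M) *m row_ebase M], whose first [\rank M] rows vanish. *)
suff -> : row i (M^C)%MS = 0 by apply: sub0mx.
rewrite /complmx row_mul (eqP freeM).
suff -> : row i (copid_mx r : 'M[F]_n) = 0 by rewrite mul0mx.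
by apply/rowP => j; rewrite !mxE ltir andbT subrr.
Qed.

Section Smoothness.
Context {R : realType} {n : nat}.
Local Notation V := 'rV[R]_n.

Lemma Ck_continuous k (h : V -> R) : Ck k h -> continuous h.
Proof. by case: k => [//|k] [dh _] x; apply: differentiable_continuous. Qed.

Lemma CkS k (h : V -> R) : Ck k.+1 h -> Ck k h.
Proof.
elim: k h => [|k IH] h; first exact: (@Ck_continuous 1).
by move=> [dh Dh]; split => // v; apply: IH.
Qed.

Lemma eq_Ck (h1 h2 : V -> R) k : h1 =1 h2 -> Ck k h1 -> Ck k h2.
Proof. by move=> /funext ->. Qed.

Lemma Ck_cst k (c : R) : Ck k (fun _ : V => c).
Proof.
elim: k c => [|k IH] c /=; first exact: cst_continuous.
split => [x|v]; first exact: differentiable_cst.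
apply: (eq_Ck (fun _ => 0)); last exact: IH.
by move=> x; rewrite derive_cst.
Qed.

Lemma CkD k (f g : V -> R) : Ck k f -> Ck k g -> Ck k (fun x => f x + g x).
Proof.
elim: k f g => [|k IH] f g /=.
  by move=> cf cg x; apply: (continuousD (cf x) (cg x)).
move=> [df Df] [dg Dg]; split => [x|v]; first exact: differentiableD.
apply: (eq_Ck (fun x => derive f x v + derive g x v)); last exact: IH.
by move=> x; rewrite deriveD //; apply: diff_derivable.
Qed.

Lemma CkM k (f g : V -> R) : Ck k f -> Ck k g -> Ck k (fun x => f x * g x).
Proof.
elim: k f g => [|k IH] f g /=.
  by move=> cf cg x; apply: (continuousM (cf x) (cg x)).
move=> [df Df] [dg Dg]; split => [x|v]; first exact: differentiableM.
apply: (eq_Ck (fun x => f x * derive g x v + g x * derive f x v)).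
  by move=> x; rewrite deriveM //; apply: diff_derivable.
by apply: CkD; apply: IH => //; apply: CkS.
Qed.

Lemma Ck_sum k (I : Type) (s : seq I) (F : I -> V -> R) :
  (forall i, Ck k (F i)) -> Ck k (fun x => \sum_(i <- s) F i x).
Proof.
move=> CkF; elim: s => [|i s IH].
  by apply: (eq_Ck (fun _ => 0)); [move=> x; rewrite big_nil|apply: Ck_cst].
apply: (eq_Ck (fun x => F i x + \sum_(j <- s) F j x)); last exact: CkD (CkF i) IH.
by move=> x; rewrite big_cons.
Qed.

Lemma smoothD (f g : V -> R) : smooth f -> smooth g -> smooth (fun x => f x + g x).
Proof. by move=> sf sg k; apply: CkD. Qed.

Lemma smoothM (f g : V -> R) : smooth f -> smooth g -> smooth (fun x => f x * g x).
Proof. by move=> sf sg k; apply: CkM. Qed.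

Lemma smooth_cst (c : R) : smooth (fun _ : V => c).
Proof. by move=> k; apply: Ck_cst. Qed.

Lemma smooth_sum (I : Type) (s : seq I) (F : I -> V -> R) :
  (forall i, smooth (F i)) -> smooth (fun x => \sum_(i <- s) F i x).
Proof. by move=> sF k; apply: Ck_sum => i; apply: sF. Qed.

Lemma eq_smooth (h1 h2 : V -> R) : h1 =1 h2 -> smooth h1 -> smooth h2.
Proof. by move=> /funext ->. Qed.

Lemma smooth_derive (h : V -> R) (v : V) : smooth h -> smooth (fun x => derive h x v).
Proof. by move=> sh k; have [_] := sh k.+1; apply. Qed.

Lemma smooth_differentiable (h : V -> R) (x : V) : smooth h -> differentiable h x.
Proof. by move=> sh; have [] := sh 1%N. Qed.

Lemma smooth_continuous (h : V -> R) : smooth h -> continuous h.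
Proof. exact: (@^~ 0%N). Qed.

End Smoothness.

Section Schwarz.
Context {R : realType} {n : nat}.
Local Notation V := 'rV[R]_n.

Lemma is_derive_line (g : V -> R) (p b : V) (t : R) :
  differentiable g (t *: b + p) ->
  is_derive t 1 (fun t : R => g (t *: b + p)) (derive g (t *: b + p) b).
Proof.
move=> dg.
have quotE : (fun k : R => k^-1 *: (((fun t : R => g (t *: b + p)) \o shift t) (k *: 1)
                                    - g (t *: b + p)))
           = (fun k : R => k^-1 *: ((g \o shift (t *: b + p)) (k *: b) - g (t *: b + p))).
  apply: funext => k /=; congr (_ *: (g _ - _)).
  by rewrite scalerDl [k *: 1]mulr1 addrA.
apply: DeriveDef; last by rewrite /derive quotE.
by rewrite /derivable quotE; apply: (diff_derivable (v := b)) dg.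
Qed.

Lemma MVT_line (g : V -> R) (p b : V) (s : R) :
  0 < s -> (forall y, differentiable g y) ->
  exists2 t, t \in `[0, s] & g (s *: b + p) - g p = s * derive g (t *: b + p) b.
Proof.
move=> s0 dg.
have cg : {within `[0, s], continuous (fun t : R => g (t *: b + p))}%classic.
  apply: continuous_subspaceT => t.
  have [D _] := is_derive_line g p b t (dg _).
  exact: differentiable_continuous ((derivable1_diffP _ _).1 D).
have [c cs E] := MVT_segment (ltW s0) (fun t _ => is_derive_line g p b t (dg _)) cg.
by exists c => //; move: E; rewrite scale0r add0r subr0 mulrC.
Qed.

Lemma derive_shift (h : V -> R) (c z v : V) :
  derive (fun y => h (y + c)) z v = derive h (z + c) v.
Proof.
have quotE :
    (fun k : R => k^-1 *: (((fun y => h (y + c)) \o shift z) (k *: v) - h (z + c)))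
  = (fun k : R => k^-1 *: ((h \o shift (z + c)) (k *: v) - h (z + c))).
  by apply: funext => k /=; rewrite addrA.
by rewrite /derive quotE.
Qed.

Lemma differentiable_shift (h : V -> R) (c z : V) :
  differentiable h (z + c) -> differentiable (fun y => h (y + c)) z.
Proof.
move=> dh; have dshift : differentiable (fun y : V => y + c) z.
  by apply: differentiableD => //; apply: differentiable_cst.
exact: differentiable_comp dshift dh.
Qed.

(* The mean value theorem, applied once along [b] and once along [a]. *)
Lemma MVT_second_difference (h : V -> R) (a b x : V) (s : R) :
  0 < s -> smooth h ->
  exists sig tau, [/\ sig \in `[0, s], tau \in `[0, s] &
   h (s *: b + x + s *: a) - h (s *: b + x) - (h (x + s *: a) - h x)
     = s * (s * derive (fun y => derive h y b) (sig *: a + (tau *: b + x)) a)].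
Proof.
move=> s0 sh.
have dh y : differentiable h y by apply: smooth_differentiable.
pose G y := h (y + s *: a) - h y.
have dG y : differentiable G y.
  by apply: differentiableB => //; apply: differentiable_shift.
have [tau taus E1] := MVT_line G x b s s0 dG.
have dhb y : differentiable (fun y => derive h y b) y.
  exact/smooth_differentiable/smooth_derive.
have [sig sigs E2] := MVT_line _ (tau *: b + x) a s s0 dhb.
exists sig, tau; split => //.
rewrite -[LHS]/(G (s *: b + x) - G x) E1 -E2; congr (_ * _).
rewrite (_ : G = (fun y => h (y + s *: a)) - h) // deriveB; last 2 first.
- exact/diff_derivable/differentiable_shift.
- exact: diff_derivable.
by rewrite derive_shift [_ + s *: a]addrC.
Qed.

Lemma MVT_mixed_partials (h : V -> R) (a b x : V) (s : R) : 0 < s -> smooth h ->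
  exists y1 y2,
  [/\ `|x - y1| <= s * (`|a| + `|b|), `|x - y2| <= s * (`|a| + `|b|) &
      derive (fun y => derive h y b) y1 a = derive (fun y => derive h y a) y2 b].
Proof.
move=> s0 sh.
have near_x (c d : V) sig tau : sig \in `[0, s] -> tau \in `[0, s] ->
    `|x - (sig *: c + (tau *: d + x))| <= s * (`|c| + `|d|).
  rewrite !in_itv /= => /andP[sig0 sigs] /andP[tau0 taus].
  rewrite addrA opprD addrCA subrr addr0 normrN (le_trans (ler_normD _ _)) //.
  by rewrite !normrZ !ger0_norm // mulrDr lerD // ler_wpM2r.
have [sig [tau [sigs taus E1]]] := MVT_second_difference h a b x s s0 sh.
have [sig' [tau' [sigs' taus' E2]]] := MVT_second_difference h b a x s s0 sh.
exists (sig *: a + (tau *: b + x)), (sig' *: b + (tau' *: a + x)); split.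
- exact: near_x.
- by rewrite [`|a| + _]addrC; apply: near_x.
- have e1 : s *: a + x + s *: b = s *: b + x + s *: a.
    by rewrite [s *: a + x]addrC -addrA [s *: a + s *: b]addrC addrA [x + s *: b]addrC.
  rewrite e1 [x + s *: b]addrC [s *: a + x]addrC in E2.
  have E : s * (s * derive (fun y => derive h y b) (sig *: a + (tau *: b + x)) a)
         = s * (s * derive (fun y => derive h y a) (sig' *: b + (tau' *: a + x)) b).
    apply: eq_trans (esym E1) (eq_trans _ E2).
    by move: (h _) (h _) (h _) (h _) => p q r t; ring.
  by move: E => /(mulfI (lt0r_neq0 s0)) /(mulfI (lt0r_neq0 s0)).
Qed.

Lemma continuous_eq_of_close_pairs (T : pseudoMetricType R) (F1 F2 : T -> R) (x : T) :
  {for x, continuous F1} -> {for x, continuous F2} ->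
  (forall eps, 0 < eps ->
     exists y1 y2, [/\ ball x eps y1, ball x eps y2 & F1 y1 = F2 y2]) ->
  F1 x = F2 x.
Proof.
move=> cF1 cF2 close; apply/eqP/negPn/negP => neqF.
pose d := `|F1 x - F2 x|.
have d2 : 0 < d / 2 by rewrite divr_gt0 // normr_gt0 subr_eq0.
have N1 : \forall y \near x, `|F1 x - F1 y| < d / 2 by apply: cvgr_dist_lt.
have N2 : \forall y \near x, `|F2 x - F2 y| < d / 2 by apply: cvgr_dist_lt.
have [eps eps0 ballF] := (nbhs_ballP _ _).1 (filterI N1 N2).
have [y1 [y2 [xy1 xy2 E]]] := close eps eps0.
have [F1y1 _] := ballF y1 xy1.
have [_ F2y2] := ballF y2 xy2.
have := ler_normD (F1 x - F1 y1) (F1 y1 - F2 x).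
rewrite addrA subrK -/d {2}E (distrC (F2 y2)) => le_d.
by clearbody d; lra.
Qed.

Lemma derive2C (h : V -> R) (a b x : V) : smooth h ->
  derive (fun y => derive h y b) x a = derive (fun y => derive h y a) x b.
Proof.
move=> sh.
pose F1 : V -> R := fun y => derive (fun y => derive h y b) y a.
pose F2 : V -> R := fun y => derive (fun y => derive h y a) y b.
change (F1 x = F2 x); apply: continuous_eq_of_close_pairs => [||eps eps0].
- exact/smooth_continuous/smooth_derive/smooth_derive.
- exact/smooth_continuous/smooth_derive/smooth_derive.
pose K := `|a| + `|b| + 1.
have K0 : 0 < K by rewrite ltr_wpDl // addr_ge0.
have [|y1 [y2 [xy1 xy2 E]]] := MVT_mixed_partials h a b x (eps / K) _ sh.
  by rewrite divr_gt0.
have close y : `|x - y| <= eps / K * (`|a| + `|b|) -> ball x eps y.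
  rewrite -ball_normE /ball_ /= => /le_lt_trans; apply.
  by rewrite mulrAC (ltr_pdivrMr _ _ K0) (ltr_pM2l eps0) ltrDl ltr01.
by exists y1, y2; split; [apply: close|apply: close|].
Qed.

End Schwarz.

Section ItoGenerator.
Context {R : realType} {n : nat}.
Local Notation V := 'rV[R]_n.
Local Notation unitv j := (delta_mx 0 j : V).

Lemma derive_coordE (h : V -> R) (x v : V) : differentiable h x ->
  derive h x v = \sum_(j < n) v ord0 j * derive h x (unitv j).
Proof.
move=> dh; rewrite deriveE // {1}(row_sum_delta v) linear_sum.
by apply: eq_bigr => j _; rewrite linearZ /= deriveE.
Qed.

Lemma derive_lincomb (c : 'I_n -> R) (g : 'I_n -> V -> R) (x w : V) :
  (forall j, differentiable (g j) x) ->
  derive (fun y => \sum_(j < n) c j * g j y) x w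
  = \sum_(j < n) c j * derive (g j) x w.
Proof.
move=> dg.
have -> : (fun y => \sum_(j < n) c j * g j y) = \sum_(j < n) (c j \*o g j).
  by rewrite fct_sumE.
rewrite derive_sum => [|j]; last exact/diff_derivable/differentiableM.
by apply: eq_bigr => j _; rewrite deriveMl //; apply: diff_derivable.
Qed.

Lemma LieE_coord (F : V -> V) (h : V -> R) (x : V) : smooth h ->
  Lie F h x = \sum_(j < n) F x ord0 j * derive h x (unitv j).
Proof. by move=> sh; rewrite /Lie derive_coordE //; apply: smooth_differentiable. Qed.

Lemma HessE_coord (F G : V -> V) (h : V -> R) (x : V) : smooth h ->
  Hess F G h x = \sum_(j < n) F x ord0 j * Lie G (fun y => derive h y (unitv j)) x.
Proof.
move=> sh; rewrite /Hess.
have -> : (fun y => derive h y (F x))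
        = (fun y => \sum_(j < n) F x ord0 j * derive h y (unitv j)).
  by apply: funext => y; rewrite derive_coordE //; apply: smooth_differentiable.
by rewrite derive_lincomb // => j; apply/smooth_differentiable/smooth_derive.
Qed.

Lemma smooth_Lie (F : V -> V) (h : V -> R) :
  smooth_vf F -> smooth h -> smooth (Lie F h).
Proof.
move=> sF sh.
apply: (eq_smooth (fun x => \sum_(j < n) F x ord0 j * derive h x (unitv j))).
  by move=> x; rewrite LieE_coord.
by apply: smooth_sum => j; apply: smoothM; [apply: sF|apply: smooth_derive].
Qed.

Lemma smooth_Hess (F G : V -> V) (h : V -> R) :
  smooth_vf F -> smooth_vf G -> smooth h -> smooth (Hess F G h).
Proof.
move=> sF sG sh.
apply: (eq_smooth
  (fun x => \sum_(j < n) F x ord0 j * Lie G (fun y => derive h y (unitv j)) x)).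
  by move=> x; rewrite HessE_coord.
apply: smooth_sum => j; apply: smoothM; first exact: sF.
by apply: smooth_Lie => //; apply: smooth_derive.
Qed.

Lemma smooth_Siter (f l : V -> V) (h : V -> R) k :
  smooth_vf f -> smooth_vf l -> smooth h -> smooth (Siter f l k h).
Proof.
move=> sf sl sh; elim: k => [//|k IH] /=.
apply: smoothD; first exact: smooth_Lie.
by apply: smoothM; [apply: smooth_cst|apply: smooth_Hess].
Qed.

Lemma Lie_addZ (F G : V -> V) (u : R) (h : V -> R) (x : V) : smooth h ->
  Lie (fun y => F y + u *: G y) h x = Lie F h x + u * Lie G h x.
Proof.
move=> sh; have dh := smooth_differentiable h x sh.
by rewrite /Lie !deriveE // linearD linearZ.
Qed.

Lemma Hess_addZ (F1 G1 F2 G2 : V -> V) (u : R) (h : V -> R) (x : V) : smooth h ->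
  Hess (fun y => F1 y + u *: G1 y) (fun y => F2 y + u *: G2 y) h x =
  Hess F1 F2 h x + u * Hess F1 G2 h x + u * Hess G1 F2 h x
  + u ^+ 2 * Hess G1 G2 h x.
Proof.
move=> sh.
have sum_expand (a b c d : 'I_n -> R) :
    \sum_(j < n) (a j + u * b j) * (c j + u * d j) =
    \sum_(j < n) a j * c j + u * \sum_(j < n) a j * d j
    + u * \sum_(j < n) b j * c j + u ^+ 2 * \sum_(j < n) b j * d j.
  by rewrite !big_distrr -!big_split; apply: eq_bigr => j _ /=; ring.
rewrite !HessE_coord // -sum_expand; apply: eq_bigr => j _.
by rewrite Lie_addZ ?mxE //; apply: smooth_derive.
Qed.

Lemma HessC (F G : V -> V) (h : V -> R) (x : V) : smooth h ->
  Hess F G h x = Hess G F h x.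
Proof.
move=> sh; rewrite (HessE_coord F G h x sh) (HessE_coord G F h x sh).
have sd j : smooth (fun y => derive h y (unitv j)) by apply: smooth_derive.
transitivity (\sum_(j < n) \sum_(k < n)
    F x ord0 j * (G x ord0 k * derive (fun y => derive h y (unitv j)) x (unitv k))).
  by apply: eq_bigr => j _; rewrite LieE_coord // big_distrr.
transitivity (\sum_(k < n) \sum_(j < n)
    G x ord0 k * (F x ord0 j * derive (fun y => derive h y (unitv k)) x (unitv j))).
  rewrite exchange_big; apply: eq_bigr => k _; apply: eq_bigr => j _.
  by rewrite (derive2C h (unitv k) (unitv j) x sh) mulrCA.
by apply: eq_bigr => k _; rewrite LieE_coord // big_distrr.
Qed.

Lemma itoDE (f g l m : V -> V) (phi : V -> R) (u xi : R) (x : V) : smooth phi ->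
  itoD f g l m phi u xi x =
    S f l phi xi x + A l m g phi xi x * u + 2^-1 * Hess m m phi x * u ^+ 2.
Proof.
move=> sp; rewrite /itoD /S /A /= !Lie_addZ // Hess_addZ // (HessC m l) //.
have expand (Lf Lg Ll Lm Hll Hlm Hmm : R) :
    Lf + u * Lg + (Ll + u * Lm) * xi + 2^-1 * (Hll + u * Hlm + u * Hlm + u ^+ 2 * Hmm)
    = Lf + Ll * xi + 2^-1 * Hll + (Lg + Lm * xi + Hlm) * u + 2^-1 * Hmm * u ^+ 2.
  by field.
exact: expand.
Qed.

Lemma itoD_Sdrift (f g l m : V -> V) (phi : V -> R) (u xi : R) (x : V) :
  smooth phi -> Lie l phi x = 0 -> Lie m phi x = 0 ->
  Lie g phi x + Hess l m phi x = 0 -> Hess m m phi x = 0 ->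
  itoD f g l m phi u xi x = Sdrift f l phi x.
Proof.
move=> sp Ll0 Lm0 LgHlm0 Hmm0; rewrite itoDE // /S /A /Sdrift Ll0 Lm0 Hmm0.
have cancel (Lf Lg Hll Hlm : R) : Lg + Hlm = 0 ->
    Lf + 0 * xi + 2^-1 * Hll + (Lg + 0 * xi + Hlm) * u + 2^-1 * 0 * u ^+ 2
    = Lf + 2^-1 * Hll.
  by move=> /eqP; rewrite addr_eq0 => /eqP ->; field.
exact: cancel.
Qed.

End ItoGenerator.

Section LinearForms.
Context {R : realType} {n : nat}.
Local Notation V := 'rV[R]_n.

Definition lin_form (c : 'rV[R]_n) : V -> R := fun x => \sum_(j < n) c ord0 j * x ord0 j.

Lemma derive_coord (j : 'I_n) (a v : V) : derive (fun y : V => y ord0 j) a v = v ord0 j.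
Proof.
have D : derivable (id : V -> V) a v by apply: derivable_id.
have := derive_mx D; rewrite derive_id.
by move=> /(congr1 (fun M : V => M ord0 j)); rewrite mxE.
Qed.

Lemma smooth_coord (j : 'I_n) : smooth (fun y : V => y ord0 j).
Proof.
case=> [|k] /=; first by move=> x; apply/differentiable_continuous/differentiable_coord.
split=> [x|v]; first exact: differentiable_coord.
apply: (eq_Ck (fun _ => v ord0 j)); last exact: Ck_cst.
by move=> x; rewrite derive_coord.
Qed.

Lemma smooth_lin_form (c : 'rV[R]_n) : smooth (lin_form c).
Proof.
by apply: smooth_sum => j; apply: smoothM; [apply: smooth_cst|apply: smooth_coord].
Qed.

Lemma grad_lin_form (c : 'rV[R]_n) (x : V) : grad (lin_form c) x = c.
Proof.
apply/rowP => k; rewrite !mxE /lin_form derive_lincomb => [|j]; last first.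
  exact: differentiable_coord.
rewrite (bigD1 k) //= big1 => [|j njk].
  by rewrite derive_coord !mxE !eqxx mulr1 addr0.
by rewrite derive_coord !mxE eqxx (negbTE njk) mulr0.
Qed.

End LinearForms.

Theorem proposition2 (R : realType) (n r : nat)
  (f g l m : 'rV[R]_n -> 'rV[R]_n) (h : 'rV[R]_n -> R) (xbar : 'rV[R]_n) :
  smooth_vf f -> smooth_vf g -> smooth_vf l -> smooth_vf m -> smooth h ->
  stoch_rel_deg f g l m h r xbar ->
  row_free (\matrix_(i < r) grad (Siter f l i h) xbar) ->
  (r < n)%N ->
  exists phi : 'I_n -> ('rV[R]_n -> R),
    (forall i : 'I_n, (i < r)%N -> phi i = Siter f l i h) /\
    (forall i : 'I_n, smooth (phi i)) /\
    (\matrix_(i < n) grad (phi i) xbar) \in unitmx /\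
    (\forall x \near xbar, forall u xi : R,
       (forall i : nat, (i.+1 < r)%N ->
          itoD f g l m (Siter f l i h) u xi x = Siter f l i.+1 h x) /\
       itoD f g l m (Siter f l r.-1 h) u xi x =
         S f l (Siter f l r.-1 h) xi x
         + A l m g (Siter f l r.-1 h) xi x * u
         + 2^-1 * Hess m m (Siter f l r.-1 h) x * u ^+ 2 /\
       (forall j : 'I_n, (r <= j)%N ->
          itoD f g l m (phi j) u xi x =
            S f l (phi j) xi x + A l m g (phi j) xi x * u
            + 2^-1 * Hess m m (phi j) x * u ^+ 2)).
Proof.
move=> sf sg sl sm sh [r0 [ND [CD _]]] freeM _.
pose M := \matrix_(i < r) grad (Siter f l i h) xbar.
pose phi (i : 'I_n) := if (i < r)%N then Siter f l i h else lin_form (row i M^C)%MS.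
have sphi i : smooth (phi i).
  by rewrite /phi; case: ifP => _; [apply: smooth_Siter|apply: smooth_lin_form].
have sSiter k : smooth (Siter f l k h) by apply: smooth_Siter.
exists phi; split; [by move=> i ltir; rewrite /phi ltir|split => //; split].
  apply: (row_free_complmx_unit _ _ _ M _ freeM) => [i ltir|i leri].
    by rewrite !rowK /phi ltir; apply/rowP => j; rewrite !mxE.
  by rewrite rowK /phi ltnNge leri grad_lin_form.
pose deg_at (k : nat) x :=
  [/\ Lie l (Siter f l k h) x = 0, Lie m (Siter f l k h) x = 0,
       Lie g (Siter f l k h) x + Hess l m (Siter f l k h) x = 0 &
       Hess m m (Siter f l k h) x = 0].
have near_deg : \forall x \near xbar, forall k : 'I_r.-1, deg_at k x.
  apply: (@filter_forall _ _ (fun k : 'I_r.-1 => deg_at k) (nbhs xbar) _) => k.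
  have k2 : (k.+2 <= r)%N by move: (ltn_ord k); rewrite -ltnS prednK.
  by apply: filterS2 (ND k k2) (CD k k2) => x [Ll Lm] [LgHlm [_ Hmm]]; split.
apply: filterS near_deg => x degx u xi; split; [|split].
- move=> i ltir; have ltir' : (i < r.-1)%N by rewrite -ltnS prednK.
  have [Ll Lm LgHlm Hmm] := degx (Ordinal ltir').
  exact: itoD_Sdrift.
- exact: itoDE.
- by move=> j _; apply: itoDE.
Qed.
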